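(* Let $G=(V,E,w)$ be an undirected graph without self-loops, with $n\ge 2$ vertices, positive edge weights and conductance $\Phi_G>0$. Let $\mathcal{T}^*$ be an optimal HC tree of $G$ with dense branch $(A_0,\dots,A_k)$, $k\ge 0$. If $|A_k|\ge (n-1)/2$, then every HC tree $\mathcal{T}$ of $G$ satisfies $\mathrm{cost}_G(\mathcal{T})\le \frac{8}{\Phi_G}\cdot\mathrm{cost}_G(\mathcal{T}^* )$.
   Context: $d_u=\sum_v w_{uv}$, $\mathrm{vol}(S)=\sum_{u\in S}d_u$, $\mathrm{vol}(G)=\mathrm{vol}(V)$; $\Phi_G(S)=w(S,V\setminus S)/\mathrm{vol}(S)$, $\Phi_G=\min\{\Phi_G(S):\emptyset\ne S\subset V,\ \mathrm{vol}(S)\le\mathrm{vol}(V)/2\}$. An HC tree is a rooted binary tree whose leaves are in bijection with $V$, nodes identified with their leaf vertex sets and $|N|$ the number of such vertices; $\mathrm{cost}_G(\mathcal{T})=\sum_{\{u,v\}\in E}w_{uv}|\mathsf{leaves}(\mathcal{T}[u\vee v])|$ with $u\vee v$ the lowest common ancestor. Dense branch: the path $(A_0,\dots,A_k)$ from the root $A_0$ where each $A_{i+1}$ is the child of $A_i$ of larger volume, and $A_k$ has $\mathrm{vol}(A_k)>\mathrm{vol}(G)/2$ while both its children have volume at most $\mathrm{vol}(G)/2$. *)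

From HB Require Import structures.
From mathcomp Require Import all_boot all_order all_algebra.
Set Implicit Arguments. Unset Strict Implicit. Unset Printing Implicit Defensive.
Import Order.TTheory GRing.Theory Num.Theory.
Local Open Scope ring_scope.

Inductive hctree (V : Type) : Type :=
| Leaf of V
| Node of hctree V & hctree V.
Arguments Leaf {V}.
Arguments Node {V}.

Fixpoint leaves {V : Type} (t : hctree V) : seq V :=
  match t with
  | Leaf v => [:: v]
  | Node l r => leaves l ++ leaves r
  end.

Definition is_hc_tree {V : finType} (t : hctree V) : Prop :=
  perm_eq (leaves t) (enum V).

Fixpoint lca_size {V : eqType} (t : hctree V) (u v : V) : nat :=
  match t with
  | Leaf _ => size (leaves t)
  | Node l r =>
      if (u \in leaves l) && (v \in leaves l) then lca_size l u v
      else if (u \in leaves r) && (v \in leaves r) then lca_size r u v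
      else size (leaves t)
  end.

Section Graph.
Variables (R : realFieldType) (V : finType) (w : V -> V -> R).

Definition deg (u : V) : R := \sum_(v : V) w u v.
Definition vol (S : {set V}) : R := \sum_(u in S) deg u.
Definition volG : R := vol [set: V].
Definition cut (S : {set V}) : R := \sum_(u in S) \sum_(v in ~: S) w u v.
Definition cond_set (S : {set V}) : R := cut S / vol S.

Definition cond_adm (S : {set V}) : bool :=
  [&& S != set0, S != [set: V] & vol S <= volG / 2%:R].

Definition is_conductance (Phi : R) : Prop :=
  (exists2 S, cond_adm S & Phi = cond_set S) /\
  (forall S, cond_adm S -> Phi <= cond_set S).

(* cost_G(T) = sum over edges {u,v} of w_uv |leaves(T[u v v])|; written as
   half of the sum over ordered pairs (w symmetric, no self loops). *)
Definition hc_cost (t : hctree V) : R :=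
  2%:R^-1 * \sum_(u : V) \sum_(v : V) w u v * (lca_size t u v)%:R.

Definition vol_node (t : hctree V) : R := \sum_(u <- leaves t) deg u.

(* Last node A_k of the dense branch: starting at the root, move to the child
   of larger volume until both children have volume <= vol(G)/2. *)
Fixpoint dense_end (t : hctree V) : hctree V :=
  match t with
  | Leaf _ => t
  | Node l r =>
      if (vol_node l <= volG / 2%:R) && (vol_node r <= volG / 2%:R) then t
      else if vol_node r <= vol_node l then dense_end l else dense_end r
  end.

Definition optimal_hc_tree (t : hctree V) : Prop :=
  is_hc_tree t /\ forall t', is_hc_tree t' -> hc_cost t <= hc_cost t'.
End Graph.

(* Let A_k = Node B C be the end of the dense branch of the tree Topt, of
   cost c*.  A leaf carries at most half of vol(G) (no self-loops), so A_k is not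
   a leaf and vol(B), vol(C) <= vol(G)/2 <= vol(B) + vol(C).  Every edge leaving B
   (or C) has its lowest common ancestor at A_k or above, so by the conductance
   bound c* >= |A_k| cut(B) >= |A_k| Phi vol(B), and likewise for C; summing,
   |A_k| Phi vol(G) <= 4 c*.  On the other hand any HC tree costs at most
   n vol(G) / 2, and n <= 2 |A_k| + 1 <= 4 |A_k|. *)

From HB Require Import structures.
From mathcomp Require Import all_boot all_order all_algebra.
From mathcomp Require Import lra.
Import Order.TTheory GRing.Theory Num.Theory.
Local Open Scope ring_scope.
Set Implicit Arguments. Unset Strict Implicit.

Fixpoint subtree {V : Type} (s t : hctree V) : Prop :=
  s = t \/ match t with Leaf _ => False | Node l r => subtree s l \/ subtree s r end.

Section Trees.
Variable V : eqType.
Implicit Types (s t l r X Y : hctree V) (u v : V).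

Lemma size_leaves_gt0 t : (0 < size (leaves t))%N.
Proof. by elim: t => //= l IHl r IHr; rewrite size_cat addn_gt0 IHl. Qed.

Lemma leaves_nonempty t : exists x, x \in leaves t.
Proof.
have := size_leaves_gt0 t.
by case: (leaves t) => // x s _; exists x; rewrite mem_head.
Qed.

Lemma lca_size_le t u v : (lca_size t u v <= size (leaves t))%N.
Proof.
elim: t => [x|l IHl r IHr] //=; rewrite size_cat.
case: ifP => _; first exact: leq_trans IHl (leq_addr _ _).
by case: ifP => _ //; exact: leq_trans IHr (leq_addl _ _).
Qed.

Lemma lca_sizeC t u v : lca_size t u v = lca_size t v u.
Proof.
elim: t => [x|l IHl r IHr] //=.
by rewrite (andbC (v \in leaves l)) (andbC (v \in leaves r)) IHl IHr.
Qed.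

Lemma mem_leaves_subtree s t u : subtree s t -> u \in leaves s -> u \in leaves t.
Proof.
elim: t => [x|l IHl r IHr] /=; first by case=> // ->.
by case=> [->//|[H|H]] us; rewrite mem_cat ?(IHl H us) ?(IHr H us) ?orbT.
Qed.

Lemma uniq_leaves_subtree s t : subtree s t -> uniq (leaves t) -> uniq (leaves s).
Proof.
elim: t => [x|l IHl r IHr] /=; first by case=> // ->.
case=> [->//|[H|H]]; rewrite cat_uniq => /and3P[ul _ ur]; [exact: IHl|exact: IHr].
Qed.

Lemma leaves_disjoint l r u :
  uniq (leaves l ++ leaves r) -> u \in leaves l -> u \notin leaves r.
Proof.
by rewrite cat_uniq => /and3P[_ dis _] ul; apply: contra dis => ur; apply/hasP; exists u.
Qed.

Lemma lca_size_subtree s t u v :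
  subtree s t -> uniq (leaves t) -> u \in leaves s ->
  (lca_size s u v <= lca_size t u v)%N.
Proof.
elim: t => [x|l IHl r IHr] /=; first by case=> // ->.
case=> [-> _ _ //|Hs] ut us.
have lca_le_child t' : (size (leaves t') <= size (leaves (Node l r)))%N ->
    (lca_size s u v <= lca_size t' u v)%N -> (lca_size s u v <= size (leaves (Node l r)))%N.
  by move=> le_t' le_s; apply: leq_trans le_s (leq_trans (lca_size_le _ _ _) le_t').
move: (ut); rewrite /= cat_uniq => /and3P[ul _ ur].
case: Hs => Hs.
- have ul' := mem_leaves_subtree Hs us.
  rewrite ul' (negbTE (leaves_disjoint ut ul')) /=.
  case: ifP => _; first exact: IHl.
  by apply: lca_le_child (IHl Hs ul us); rewrite size_cat leq_addr.
- have ur' := mem_leaves_subtree Hs us.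
  have ul' : u \notin leaves l.
    by apply: contraL ur' => ul'; exact: leaves_disjoint ut ul'.
  rewrite (negbTE ul') ur' /=.
  case: ifP => _; first exact: IHr.
  by apply: lca_le_child (IHr Hs ur us); rewrite size_cat leq_addl.
Qed.

Lemma lca_size_child_out s X Y u v :
  (s = Node X Y \/ s = Node Y X) -> uniq (leaves s) ->
  u \in leaves X -> v \notin leaves X -> lca_size s u v = size (leaves s).
Proof.
case=> -> us uX vX /=; rewrite uX (negbTE vX) /=.
- by rewrite (negbTE (leaves_disjoint us uX)).
- by rewrite uniq_catC in us; rewrite (negbTE (leaves_disjoint us uX)).
Qed.

End Trees.

Section Graph.
Variables (R : realFieldType) (V : finType) (w : V -> V -> R).
Hypothesis w_sym : forall u v, w u v = w v u.
Hypothesis w_noloop : forall u, w u u = 0.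
Hypothesis w_ge0 : forall u v, 0 <= w u v.

Notation half := (volG w / 2%:R).

Lemma deg_ge0 u : 0 <= deg w u.
Proof. exact: sumr_ge0. Qed.

Lemma vol_ge0 (S : {set V}) : 0 <= vol w S.
Proof. by apply: sumr_ge0 => u _; exact: deg_ge0. Qed.

Lemma cut_ge0 (S : {set V}) : 0 <= cut w S.
Proof. by apply: sumr_ge0 => u _; exact: sumr_ge0. Qed.

Lemma volGE : volG w = \sum_u deg w u.
Proof. by rewrite /volG /vol; apply: eq_bigl => u; rewrite in_setT. Qed.

Lemma vol_le_volG (S : {set V}) : vol w S <= volG w.
Proof.
rewrite volGE /vol big_mkcond /=; apply: ler_sum => u _.
by case: (u \in S) => //; exact: deg_ge0.
Qed.

Lemma vol_leaves t : uniq (leaves t) -> vol w [set x | x \in leaves t] = vol_node w t.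
Proof. by move=> ut; rewrite /vol /vol_node big_uniq //; apply: eq_bigl => u; rewrite inE. Qed.

Lemma vol_node_hc_tree t : is_hc_tree t -> vol_node w t = volG w.
Proof.
by move=> ht; rewrite /vol_node (perm_big _ ht) big_enum volGE; apply: eq_bigl => u; rewrite inE.
Qed.

(* Each edge at x is counted again in the degree of its other endpoint. *)
Lemma deg_le_half x : deg w x <= half.
Proof.
suff : deg w x + deg w x <= volG w by lra.
rewrite volGE (bigD1 x) //= lerD2l.
have -> : deg w x = \sum_(v | v != x) w v x.
  by rewrite /deg (bigD1 x) //= w_noloop add0r; apply: eq_bigr => v _; exact: w_sym.
by apply: ler_sum => v _; rewrite /deg (bigD1 x) //= lerDl; exact: sumr_ge0.
Qed.

Lemma subtree_dense_end t : subtree (dense_end w t) t.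
Proof.
elim: t => [x|l IHl r IHr] /=; first by left.
by case: ifP => _; [left | case: ifP => _; right; [left|right]].
Qed.

Lemma dense_end_Node t : half < vol_node w t ->
  exists B C, [/\ dense_end w t = Node B C,
    vol_node w B <= half, vol_node w C <= half & half <= vol_node w B + vol_node w C].
Proof.
rewrite /vol_node; elim: t => [x|l IHl r IHr] /=.
  by rewrite big_seq1 => /lt_le_trans/(_ (deg_le_half x)); rewrite ltxx.
rewrite big_cat /= => lt_half.
case: ifP => [/andP[Hl Hr]|]; first by exists l, r; split=> //; exact: ltW.
move/negbT; rewrite negb_and -!ltNge => Hn.
case: ifP => Hrl.
- by apply: IHl; case/orP: Hn => // Hr; exact: lt_le_trans Hr Hrl.
- move/negbT: Hrl; rewrite -ltNge => Hrl.
  by apply: IHr; case/orP: Hn => // Hl; exact: lt_trans Hl Hrl.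
Qed.

Lemma conductance_le_cut Phi (S : {set V}) :
  is_conductance w Phi -> cond_adm w S -> Phi * vol w S <= cut w S.
Proof.
move=> [_ Phi_min] /Phi_min; rewrite /cond_set.
have [->|nz] := eqVneq (vol w S) 0; first by rewrite mulr0 cut_ge0.
by rewrite ler_pdivlMr // lt0r nz vol_ge0.
Qed.

Lemma volG_gt0 Phi : is_conductance w Phi -> 0 < Phi -> 0 < volG w.
Proof.
move=> [[S _ ->] _]; rewrite /cond_set.
have [->|nz _] := eqVneq (vol w S) 0; first by rewrite invr0 mulr0 ltxx.
by apply: lt_le_trans (vol_le_volG S); rewrite lt0r nz vol_ge0.
Qed.

(* Every edge crossing S is charged at least [a] leaves, once from each end. *)
Lemma hc_cost_ge_cut t (S : {set V}) (a : nat) :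
  (forall u v, u \in S -> v \notin S -> (a <= lca_size t u v)%N) ->
  a%:R * cut w S <= hc_cost w t.
Proof.
move=> Ha.
pose g u v := if (u \in S) && (v \notin S) then w u v * a%:R else 0.
have sum_g : \sum_u \sum_v g u v = a%:R * cut w S.
  rewrite /cut mulr_sumr [RHS]big_mkcond /=; apply: eq_bigr => u _.
  rewrite /g; case: (u \in S) => /=; last by rewrite big1.
  rewrite mulr_sumr [RHS]big_mkcond /=; apply: eq_bigr => v _.
  by rewrite inE; case: (v \in S) => //=; rewrite mulrC.
have sum_g2 : \sum_u \sum_v (g u v + g v u) = a%:R * cut w S + a%:R * cut w S.
  rewrite -sum_g; under eq_bigr => x _ do rewrite big_split /=.
  by rewrite big_split /= [X in _ + X]exchange_big.
have le_g2 : \sum_u \sum_v (g u v + g v u) <= \sum_u \sum_v w u v * (lca_size t u v)%:R.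
  apply: ler_sum => u _; apply: ler_sum => v _.
  rewrite /g; case Hu: (u \in S); case Hv: (v \in S) => /=;
    rewrite ?add0r ?addr0 ?mulr_ge0 ?ler0n //.
  - by apply: ler_wpM2l => //; rewrite ler_nat Ha ?Hu ?Hv.
  - by rewrite w_sym lca_sizeC; apply: ler_wpM2l => //; rewrite ler_nat Ha ?Hu ?Hv.
move: le_g2; rewrite sum_g2 /hc_cost; lra.
Qed.

Lemma hc_cost_le t : is_hc_tree t -> hc_cost w t <= 2%:R^-1 * (volG w * #|V|%:R).
Proof.
move=> ht; rewrite /hc_cost ler_wpM2l ?invr_ge0 ?ler0n //.
rewrite volGE mulr_suml; apply: ler_sum => u _; rewrite /deg mulr_suml.
apply: ler_sum => v _; rewrite ler_wpM2l // ler_nat.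
by apply: leq_trans (lca_size_le _ _ _) _; rewrite (perm_size ht) -cardE.
Qed.

Section ChildOfSubtree.
Variables (t s X Y : hctree V).
Hypotheses (ut : uniq (leaves t)) (sub_st : subtree s t).
Hypothesis child_X : s = Node X Y \/ s = Node Y X.

Let us : uniq (leaves s) := uniq_leaves_subtree sub_st ut.

Lemma hc_cost_ge_child_cut :
  (size (leaves s))%:R * cut w [set x | x \in leaves X] <= hc_cost w t.
Proof.
apply: hc_cost_ge_cut => u v; rewrite !inE => uX vX.
rewrite -(lca_size_child_out child_X us uX vX) lca_size_subtree //.
by case: child_X => ->; rewrite /= mem_cat uX ?orbT.
Qed.

Lemma cond_adm_child : vol_node w X <= half -> cond_adm w [set x | x \in leaves X].
Proof.
have uXY : uniq (leaves X ++ leaves Y) by case: child_X us => ->; rewrite //= uniq_catC.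
have [xX xXin] := leaves_nonempty X; have [xY xYin] := leaves_nonempty Y.
move=> vol_X; apply/and3P; split.
- by apply/set0Pn; exists xX; rewrite inE.
- apply/negP => /eqP XT; have : xY \in [set x | x \in leaves X] by rewrite XT in_setT.
  by rewrite inE => xYX; move: (leaves_disjoint (l := X) uXY xYX); rewrite xYin.
- by rewrite vol_leaves //; move: uXY; rewrite cat_uniq => /andP[].
Qed.

Lemma hc_cost_ge_child_vol Phi : is_conductance w Phi -> 0 <= Phi ->
  vol_node w X <= half -> (size (leaves s))%:R * (Phi * vol_node w X) <= hc_cost w t.
Proof.
move=> hPhi Phi_ge0 vol_X; apply: le_trans hc_cost_ge_child_cut.
have uX : uniq (leaves X) by case: child_X us => -> /=; rewrite cat_uniq => /and3P[].
rewrite ler_wpM2l // -(vol_leaves uX); exact: conductance_le_cut (cond_adm_child vol_X).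
Qed.

End ChildOfSubtree.

Lemma hc_cost_ge_dense_end Phi t : is_conductance w Phi -> 0 < Phi -> is_hc_tree t ->
  (size (leaves (dense_end w t)))%:R * Phi * volG w <= 4%:R * hc_cost w t.
Proof.
move=> hPhi Phi_gt0 ht; have G_gt0 := volG_gt0 hPhi Phi_gt0.
have ut : uniq (leaves t) by rewrite (perm_uniq ht) enum_uniq.
have [|B [C [AkE volB volC volBC]]] := @dense_end_Node t.
  by rewrite vol_node_hc_tree //; lra.
have sub := subtree_dense_end t; rewrite AkE in sub *.
have lbB := hc_cost_ge_child_vol ut sub (or_introl erefl) hPhi (ltW Phi_gt0) volB.
have lbC := hc_cost_ge_child_vol ut sub (or_intror erefl) hPhi (ltW Phi_gt0) volC.
have A_ge0 : 0 <= (size (leaves (Node B C)))%:R :> R by [].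
move: lbB lbC A_ge0 volBC; set A := (size _)%:R => lbB lbC A_ge0 volBC.
have : A * Phi * (volG w / 2%:R) <= A * Phi * (vol_node w B + vol_node w C).
  by rewrite ler_wpM2l // mulr_ge0 // ltW.
nra.
Qed.

End Graph.

Theorem mainTheorem5 (R : realFieldType) (V : finType) (w : V -> V -> R)
  (w_sym : forall u v, w u v = w v u)
  (w_noloop : forall u, w u u = 0)
  (w_ge0 : forall u v, 0 <= w u v)
  (n_ge2 : (2 <= #|V|)%N)
  (Phi : R) (hPhi : is_conductance w Phi) (Phi_gt0 : 0 < Phi)
  (Topt : hctree V) (hopt : optimal_hc_tree w Topt)
  (hAk : ((#|V|%:R - 1) / 2%:R <= (size (leaves (dense_end w Topt)))%:R :> R)) :
  forall T : hctree V, is_hc_tree T ->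
    hc_cost w T <= 8%:R / Phi * hc_cost w Topt.
Proof.
move=> T hT; have [hTopt _] := hopt.
have lb := hc_cost_ge_dense_end w_sym w_noloop w_ge0 hPhi Phi_gt0 hTopt.
have ub := hc_cost_le w_ge0 hT.
have G_gt0 := volG_gt0 w_ge0 hPhi Phi_gt0.
have A_ge1 : 1 <= (size (leaves (dense_end w Topt)))%:R :> R.
  by rewrite ler1n size_leaves_gt0.
move: hAk lb ub A_ge1 G_gt0.
set A := (size _)%:R; set n := #|V|%:R; set G := volG w => hAk lb ub A_ge1 G_gt0.
have n_le : G * n <= G * (4%:R * A) by rewrite ler_wpM2l ?ltW //; lra.
rewrite mulrAC ler_pdivlMr //; nra.
Qed.
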